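(* For every $k\ge0$, $$t_k=\sum_{n\ge0}\frac{(-1)^n}{n!}I_0^nI_{n+k},$$ $$s_k=\sum_{n\ge0}\sum_{i=0}^n\frac{(-1)^{n+1}I_0^iJ_0^{2n-2i+1}}{2^{n-i}\,i!\,(n-i)!\,(2n-2i+1)}I_{n+k+1}+\sum_{n\ge0}\frac{(-1)^n}{n!}\Big(I_0+\tfrac12J_0^2\Big)^nJ_{n+k}.$$ In particular the change of variables $(\mathbf t,\mathbf s)\mapsto(I_k,J_k)_{k\ge0}$ is invertible.
   Context: Let $\mathbf t=(t_0,t_1,\dots)$, $\mathbf s=(s_0,s_1,\dots)$ be formal variables and $\tilde t_n=t_n-\delta_{n,1}$. Let $v=v(\mathbf t)$ and $r=r(\mathbf t,\mathbf s)$ be the unique formal power series with $v(0)=0$, $r(0)=0$ solving the genus-zero Euler–Lagrange equations $\sum_{n\ge0}\tilde t_n\frac{v^n}{n!}=0$ and $\sum_{n\ge0}\tilde t_{n+1}\sum_{i=0}^n\frac{v^ir^{2n-2i+1}}{i!(2n-2i+1)!!}+\sum_{n\ge0}\frac{s_n}{n!}\big(v+\frac{r^2}2\big)^n=0$ (these are $v_{\rm top}=\partial_{t_0}^2\mathcal F^c_0$ and $r_{\rm top}=\partial_{t_0}\mathcal F^o_0$). Define the Itzykson–Zuber type variables $I_k=\sum_{n\ge0}t_{n+k}\frac{v^n}{n!}$, $J_k=\sum_{n\ge0}t_{n+k+1}\sum_{i=0}^n\frac{v^ir^{2n-2i+1}}{i!(2n-2i+1)!!}+\sum_{n\ge0}\frac{s_{n+k}}{n!}\big(v+\frac{r^2}2\big)^n$,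 $k\ge0$. (One has $I_0=v$, $J_0=r$.) *)

(* Formal power series over Q in the countably many
   variables t_0, t_1, ..., s_0, s_1, ...  (variable t_i has index 2i,
   variable s_i has index 2i+1).  A monomial is a list of exponents
   (position j = exponent of variable j), taken modulo trailing zeros. *)
From mathcomp Require Import all_boot all_order all_algebra.
From Stdlib Require Import ClassicalEpsilon.
Set Implicit Arguments. Unset Strict Implicit. Unset Printing Implicit Defensive.
Import Order.TTheory GRing.Theory Num.Theory.
Local Open Scope ring_scope.

Fixpoint strip (m : seq nat) : seq nat :=
  match m with
  | [::] => [::]
  | x :: m' => let t := strip m' in
               if (x == 0)%N && (t == [::]) then [::] else x :: t
  end.

(* a formal power series = its coefficient function on monomials;
   only the values on stripped monomials are ever used *)
Definition ps := seq nat -> rat.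

Fixpoint divs (m : seq nat) : seq (seq nat) :=
  match m with
  | [::] => [:: [::]]
  | x :: m' => [seq a :: d | a <- iota 0 x.+1, d <- divs m']
  end.

Definition ps_const (c : rat) : ps := fun m => if strip m == [::] then c else 0.
Definition ps_zero : ps := ps_const 0.
Definition ps_one : ps := ps_const 1.
Definition ps_add (f g : ps) : ps := fun m => f (strip m) + g (strip m).
Definition ps_opp (f : ps) : ps := fun m => - f (strip m).
Definition ps_sub (f g : ps) : ps := ps_add f (ps_opp g).
Definition ps_scale (c : rat) (f : ps) : ps := fun m => c * f (strip m).
Definition ps_mul (f g : ps) : ps := fun m =>
  let m' := strip m in
  \sum_(a <- divs m') f (strip a) * g (strip [seq x.1 - x.2 | x <- zip m' a]%N).
Definition ps_pow (f : ps) (n : nat) : ps := iter n (ps_mul f) ps_one.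

Definition ps_var (j : nat) : ps :=
  fun m => if strip m == rcons (nseq j 0%N) 1%N then 1 else 0.
Definition tv (n : nat) : ps := ps_var (2 * n).
Definition sv (n : nat) : ps := ps_var (2 * n).+1.
Definition ttv (n : nat) : ps :=
  if n == 1%N then ps_sub (tv 1) ps_one else tv n.

(* infinite sum, coefficientwise: the coefficient of m is the eventual
   value of the partial sums (the sum is meaningful when, for every
   monomial, the partial sums are eventually constant, which is the case
   for all sums below) *)
Definition ps_sum (F : nat -> ps) : ps := fun m =>
  epsilon (inhabits 0) (fun c : rat =>
    exists N, forall N', (N <= N')%N -> \sum_(n < N') F n (strip m) = c).

Fixpoint dfact (n : nat) : nat :=
  match n with
  | 0 | 1 => 1
  | n'.+2 => n'.+2 * dfact n'
  end%N.

Definition invn (n : nat) : rat := (n%:R)^-1.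

Definition Pn (v r : ps) (n : nat) : ps :=
  \big[ps_add/ps_zero]_(i < n.+1)
    ps_scale (invn (i`! * dfact (2 * n - 2 * i + 1))%N)
             (ps_mul (ps_pow v i) (ps_pow r (2 * n - 2 * i + 1))).

Definition wvr (v r : ps) : ps := ps_add v (ps_scale (invn 2) (ps_pow r 2)).

Definition EL1 (v : ps) : Prop :=
  ps_sum (fun n => ps_scale (invn n`!) (ps_mul (ttv n) (ps_pow v n))) = ps_zero.
Definition EL2 (v r : ps) : Prop :=
  ps_add (ps_sum (fun n => ps_mul (ttv n.+1) (Pn v r n)))
         (ps_sum (fun n => ps_scale (invn n`!) (ps_mul (sv n) (ps_pow (wvr v r) n))))
  = ps_zero.

Definition Ik (v : ps) (k : nat) : ps :=
  ps_sum (fun n => ps_scale (invn n`!) (ps_mul (tv (n + k)) (ps_pow v n))).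
Definition Jk (v r : ps) (k : nat) : ps :=
  ps_add (ps_sum (fun n => ps_mul (tv (n + k).+1) (Pn v r n)))
         (ps_sum (fun n => ps_scale (invn n`!) (ps_mul (sv (n + k)) (ps_pow (wvr v r) n)))).

Definition sgn (n : nat) : rat := (-1) ^+ n.

Definition t_inv (v : ps) (k : nat) : ps :=
  ps_sum (fun n => ps_scale (sgn n * invn n`!)
                            (ps_mul (ps_pow (Ik v 0) n) (Ik v (n + k)))).

Definition s_inv (v r : ps) (k : nat) : ps :=
  ps_add
    (ps_sum (fun n =>
       \big[ps_add/ps_zero]_(i < n.+1)
         ps_scale (sgn n.+1 *
                   invn (2 ^ (n - i) * i`! * (n - i)`! * (2 * n - 2 * i + 1))%N)
           (ps_mul (ps_mul (ps_pow (Ik v 0) i) (ps_pow (Jk v r 0) (2 * n - 2 * i + 1)))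
                   (Ik v (n + k).+1))))
    (ps_sum (fun n => ps_scale (sgn n * invn n`!)
        (ps_mul (ps_pow (ps_add (Ik v 0) (ps_scale (invn 2) (ps_pow (Jk v r 0) 2))) n)
                (Jk v r (n + k))))).

From HB Require Import structures.
From mathcomp Require Import all_boot all_order all_algebra.
From mathcomp Require Import boolp ring zify.
From Stdlib Require Import ClassicalEpsilon.
Set Implicit Arguments. Unset Strict Implicit. Unset Printing Implicit Defensive.
Import Order.TTheory GRing.Theory Num.Theory.
Local Open Scope ring_scope.

(* Write V = v and R = r: the Euler--Lagrange equations say exactly that
   I_0 = V and J_0 = R.  Since I_k = \sum_m t_(m+k) V^m/m!, the sum
   \sum_n (-1)^n V^n/n! I_(n+k) collects t_(s+k) with coefficient the z^s
   coefficient of e^(-Vz) e^(Vz), so it equals t_k.  For s_k, with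
   W = V + R^2/2, the s-part of J_k is inverted by e^(-Wz) in the same way,
   and the t-terms left over have z-series e^(-Wz) P(z) + Q(z) e^(Vz), where
   P(z) = e^(Vz) A(z) and Q(z) = - e^(-Vz) e^(-R^2 z/2) A(z) with
   A(z) = \sum_j R^(2j+1) z^j/(2j+1)!!; hence they cancel.  The only numerical
   input is e^(-z/2) \sum_j z^j/(2j+1)!! = \sum_s (-z)^s/(2^s s! (2s+1)).
   Every infinite sum involved has its n-th term of order at least n, so
   it is computed coefficientwise by truncating in total degree. *)

Lemma sum_antidiag3 (R : zmodType) (K : nat -> nat -> nat -> R) x :
  \sum_(0 <= a < x.+1) \sum_(0 <= b < a.+1) K b (a - b)%N (x - a)%N =
  \sum_(0 <= b < x.+1) \sum_(0 <= c < (x - b).+1) K b c (x - b - c)%N.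
Proof.
transitivity (\sum_(0 <= a < x.+1) \sum_(0 <= b < x.+1 | (b <= a)%N)
                K b (a - b)%N (x - a)%N).
  apply: eq_big_nat => a /andP[_ Ha].
  by rewrite (big_nat_widen 0 a.+1 x.+1).
rewrite (exchange_big_dep_nat predT) //; apply: eq_big_nat => b /andP[_ Hb].
rewrite (big_cat_nat (leq0n b) (ltnW Hb)) /= big_nat_cond big_pred0 ?add0r; last first.
  by move=> a; rewrite -andbA andbC; case: leqP => //=; rewrite andbF.
rewrite -[b in \big[_/_]_(b <= _ < _ | _) _]add0n big_addn.
rewrite subSn //; apply: eq_big => [c|c _]; first by rewrite leq_addl.
by rewrite addnK addnC subnDA.
Qed.

Lemma sum_triangle_antidiag (R : zmodType) (X : nat -> nat -> R) N :
  \sum_(0 <= n < N) \sum_(0 <= m < N - n) X n m =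
  \sum_(0 <= s < N) \sum_(0 <= n < s.+1) X n (s - n)%N.
Proof.
elim: N => [|N IH]; first by rewrite !big_geq.
rewrite [RHS]big_nat_recr //= -IH.
rewrite (@eq_big_nat _ _ _ 0 N.+1 _
  (fun n => \sum_(0 <= m < N - n) X n m + X n (N - n)%N)); last first.
  by move=> n /andP[_ Hn]; rewrite subSn ?big_nat_recr // -ltnS.
by rewrite big_split /= big_nat_recr //= subnn [X in _ + X + _]big_geq // addr0.
Qed.

(** * Monomials and their divisors *)

Definition mdiff (m a : seq nat) : seq nat := [seq (x.1 - x.2)%N | x <- zip m a].

Lemma mdiff_cons x m a d : mdiff (x :: m) (a :: d) = (x - a)%N :: mdiff m d.
Proof. by []. Qed.

Lemma strip_idem m : strip (strip m) = strip m.
Proof. by elim: m => //= x m IH; case: ifP => //= H; rewrite IH H. Qed.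

Lemma strip_cat_nseq l k : strip (l ++ nseq k 0%N) = strip l.
Proof. by elim: l => [|x l /= ->] //=; elim: k => //= k ->. Qed.

Lemma strip_pad m : exists k, m = strip m ++ nseq k 0%N.
Proof.
elim: m => [|x m [k Hk]]; first by exists 0%N.
rewrite /=; case: ifP => [/andP[/eqP -> /eqP E]|_]; last by exists k; rewrite /= {1}Hk.
by exists k.+1; rewrite /= {1}Hk E.
Qed.

Lemma sumn_strip m : sumn (strip m) = sumn m.
Proof.
have [k {2}->] := strip_pad m; rewrite sumn_cat.
by elim: k => [|k]; rewrite ?addn0.
Qed.

Lemma strip_eq_nil m : (strip m == [::]) = (sumn m == 0%N).
Proof.
elim: m => //= x m IH; rewrite addn_eq0 -IH.
by case: (x == 0%N); case: (strip m == [::]).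
Qed.

Lemma sum_divs_cons (R : zmodType) (F : seq nat -> R) x m :
  \sum_(b <- divs (x :: m)) F b = \sum_(0 <= a < x.+1) \sum_(d <- divs m) F (a :: d).
Proof. by rewrite big_allpairs_dep /index_iota subn0. Qed.

Lemma divs_consP x m b : b \in divs (x :: m) ->
  exists a d, [/\ (a <= x)%N, d \in divs m & b = a :: d].
Proof.
move=> /allpairsPdep [a [d [Ha Hd ->]]]; exists a, d; split=> //.
by move: Ha; rewrite mem_iota add0n ltnS.
Qed.

Lemma size_divs m b : b \in divs m -> size b = size m.
Proof.
elim: m b => [|x m IH] b; first by rewrite inE => /eqP ->.
by move/divs_consP => [a [d [_ Hd ->]]] /=; rewrite (IH _ Hd).
Qed.

Lemma sumn_mdiff m b : b \in divs m -> (sumn b + sumn (mdiff m b) = sumn m)%N.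
Proof.
elim: m b => [|x m IH] b; first by rewrite inE => /eqP ->.
by move/divs_consP => [a [d [Ha Hd ->]]] /=; rewrite -(IH _ Hd) addnACA subnKC.
Qed.

Lemma sum_divs_strip (R : zmodType) (G : seq nat -> seq nat -> R) m :
  \sum_(b <- divs (strip m)) G (strip b) (strip (mdiff (strip m) b)) =
  \sum_(b <- divs m) G (strip b) (strip (mdiff m b)).
Proof.
have [k {3 4}->] := strip_pad m.
have divs_cat (F : seq nat -> R) y z :
    \sum_(b <- divs (y ++ z)) F b = \sum_(b <- divs y) \sum_(c <- divs z) F (b ++ c).
  elim: y F => [|x y IH] F; first by rewrite big_seq1.
  by rewrite cat_cons !sum_divs_cons; apply: eq_bigr => a _; rewrite IH.
rewrite divs_cat; apply: eq_big_seq => b Hb.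
have -> : divs (nseq k 0%N) = [:: nseq k 0%N] by elim: k => //= k ->.
rewrite big_seq1 /mdiff zip_cat ?(size_divs Hb) // map_cat.
have -> : [seq (x.1 - x.2)%N | x <- zip (nseq k 0%N) (nseq k 0%N)] = nseq k 0%N.
  by elim: k => //= k ->.
by rewrite !strip_cat_nseq.
Qed.

Lemma sum_divs_assoc (R : zmodType) m (H : seq nat -> seq nat -> seq nat -> R) :
  \sum_(a <- divs m) \sum_(b <- divs a) H b (mdiff a b) (mdiff m a) =
  \sum_(b <- divs m) \sum_(c <- divs (mdiff m b)) H b c (mdiff (mdiff m b) c).
Proof.
elim: m H => [|x m IH] H; first by rewrite /= !big_seq1.
rewrite !sum_divs_cons.
transitivity (\sum_(0 <= a < x.+1) \sum_(0 <= b < a.+1)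
  \sum_(a' <- divs m) \sum_(b' <- divs a')
     H (b :: b') ((a - b)%N :: mdiff a' b') ((x - a)%N :: mdiff m a')).
  apply: eq_bigr => a _; under eq_bigr => d _ do rewrite sum_divs_cons.
  exact: exchange_big.
under eq_bigr => a _ do under eq_bigr => b _ do
  rewrite (IH (fun b' c' e' => H (b :: b') ((a - b)%N :: c') ((x - a)%N :: e'))).
rewrite (sum_antidiag3 (fun b c e => \sum_(b' <- divs m) \sum_(c' <- divs (mdiff m b'))
     H (b :: b') (c :: c') (e :: mdiff (mdiff m b') c'))).
apply: eq_bigr => b _; under [RHS]eq_bigr => d _ do rewrite sum_divs_cons.
exact: exchange_big.
Qed.

Lemma sum_divs_comm (R : zmodType) m (H : seq nat -> seq nat -> R) :
  \sum_(b <- divs m) H b (mdiff m b) = \sum_(b <- divs m) H (mdiff m b) b.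
Proof.
elim: m H => [|x m IH] H; first by rewrite /= !big_seq1.
rewrite !sum_divs_cons.
under eq_bigr => a _ do rewrite (IH (fun b c => H (a :: b) ((x - a)%N :: c))).
rewrite big_nat_rev; apply: eq_big_nat => a /andP[_ Ha].
by rewrite add0n subSS; apply: eq_bigr => d _ /=; rewrite subKn // -ltnS.
Qed.

Lemma sum_divs_unit (R : zmodType) m (H : seq nat -> seq nat -> R) :
  \sum_(b <- divs m) (if sumn b == 0%N then H b (mdiff m b) else 0) =
  H (nseq (size m) 0%N) m.
Proof.
elim: m H => [|x m IH] H; first by rewrite big_seq1.
rewrite sum_divs_cons big_nat_recl // [X in _ + X]big1 ?addr0; last first.
  by move=> a _; apply: big1 => d _.
rewrite -(IH (fun b c => H (0%N :: b) (x :: c))); apply: eq_bigr => d _.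
by rewrite mdiff_cons [sumn _]/= add0n subn0.
Qed.

(** * The ring of power series *)

Definition strip_stable (f : ps) := forall m, f m = f (strip m).

(* The operations on [ps] only read values at stripped monomials, so on
   strip-stable functions they satisfy the ring laws as equalities. *)
Definition fps := {f : ps | strip_stable f}.
HB.instance Definition _ := gen_eqMixin fps.
HB.instance Definition _ := gen_choiceMixin fps.

Definition fps_coef (f : fps) : seq nat -> rat := proj1_sig f.
Coercion fps_coef : fps >-> Funclass.

Lemma fps_coef_strip (f : fps) m : f (strip m) = f m.
Proof. by rewrite [RHS](proj2_sig f). Qed.

Lemma fpsP (f g : fps) : (forall m, f m = g m) -> f = g.
Proof.
case: f g => [f Hf] [g Hg] /= /funext E; subst g.
by rewrite (Prop_irrelevance Hf Hg).
Qed.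

Lemma strip_stable_add f g : strip_stable (ps_add f g).
Proof. by move=> m; rewrite /ps_add strip_idem. Qed.
Lemma strip_stable_opp f : strip_stable (ps_opp f).
Proof. by move=> m; rewrite /ps_opp strip_idem. Qed.
Lemma strip_stable_const c : strip_stable (ps_const c).
Proof. by move=> m; rewrite /ps_const strip_idem. Qed.
Lemma strip_stable_mul f g : strip_stable (ps_mul f g).
Proof. by move=> m; rewrite /ps_mul strip_idem. Qed.

Definition fps_add (f g : fps) : fps := exist _ _ (strip_stable_add f g).
Definition fps_opp (f : fps) : fps := exist _ _ (strip_stable_opp f).
Definition fpsC (q : rat) : fps := exist _ _ (strip_stable_const q).
Definition fps_mul (f g : fps) : fps := exist _ _ (strip_stable_mul f g).

Lemma ps_const_strip q m : ps_const q (strip m) = if sumn m == 0%N then q else 0.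
Proof. by rewrite /ps_const strip_idem strip_eq_nil. Qed.

Lemma ps_mul_const q f m : ps_mul (ps_const q) f m = q * f (strip m).
Proof.
rewrite /ps_mul -[in RHS]strip_idem.
rewrite -(sum_divs_unit (strip m) (fun _ c => q * f (strip c))).
by apply: eq_bigr => b _; rewrite ps_const_strip; case: ifP; rewrite ?mul0r.
Qed.

Lemma fps_addA : associative fps_add.
Proof. by move=> f g h; apply: fpsP => m; rewrite /= /ps_add !strip_idem addrA. Qed.
Lemma fps_addC : commutative fps_add.
Proof. by move=> f g; apply: fpsP => m; rewrite /= /ps_add addrC. Qed.
Lemma fps_add0 : left_id (fpsC 0) fps_add.
Proof.
move=> f; apply: fpsP => m.
by rewrite /= /ps_add ps_const_strip if_same add0r fps_coef_strip.
Qed.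
Lemma fps_addN : left_inverse (fpsC 0) fps_opp fps_add.
Proof.
move=> f; apply: fpsP => m; rewrite /= /ps_add /ps_opp strip_idem addNr.
by rewrite /ps_const; case: ifP.
Qed.

HB.instance Definition _ :=
  GRing.isZmodule.Build fps fps_addA fps_addC fps_add0 fps_addN.

Lemma fps_mul_coef (f g : fps) m :
  fps_mul f g m = \sum_(y <- divs (strip m)) f (strip y) * g (strip (mdiff (strip m) y)).
Proof. by []. Qed.

Lemma fps_mul_coef_strip (f g : fps) m :
  fps_mul f g (strip m) = \sum_(y <- divs m) f (strip y) * g (strip (mdiff m y)).
Proof. by rewrite fps_mul_coef strip_idem (sum_divs_strip (fun y z => f y * g z)). Qed.

Lemma fps_mulA : associative fps_mul.
Proof.
move=> f g h; apply: fpsP => m; rewrite !fps_mul_coef.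
under eq_bigr => x _ do rewrite fps_mul_coef_strip big_distrr /=.
under [RHS]eq_bigr => x _ do rewrite fps_mul_coef_strip big_distrl /=.
rewrite (sum_divs_assoc (strip m) (fun x y z => f (strip x) * g (strip y) * h (strip z))).
by apply: eq_bigr => x _; apply: eq_bigr => y _; rewrite mulrA.
Qed.

Lemma fps_mulC : commutative fps_mul.
Proof.
move=> f g; apply: fpsP => m; rewrite /= /ps_mul.
rewrite (sum_divs_comm (strip m) (fun x y => f (strip x) * g (strip y))).
by apply: eq_bigr => x _; rewrite mulrC.
Qed.

Lemma fps_mul1 : left_id (fpsC 1) fps_mul.
Proof. by move=> f; apply: fpsP => m; rewrite /= ps_mul_const mul1r fps_coef_strip. Qed.

Lemma fps_mulDl : left_distributive fps_mul fps_add.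
Proof.
move=> f g h; apply: fpsP => m; rewrite /= /ps_mul /ps_add !strip_idem -big_split /=.
by apply: eq_bigr => x _; rewrite !strip_idem mulrDl.
Qed.

Lemma fps1_neq0 : fpsC 1 != fpsC 0.
Proof. by apply/eqP => /(congr1 (fun f : fps => f [::])); rewrite /= /ps_const. Qed.

HB.instance Definition _ := GRing.Zmodule_isComNzRing.Build fps
  fps_mulA fps_mulC fps_mul1 fps_mulDl fps1_neq0.

Lemma fpsCD : {morph fpsC : p q / p + q}.
Proof.
move=> p q; apply: fpsP => m.
by rewrite /= /ps_add !ps_const_strip /ps_const strip_eq_nil; case: ifP; rewrite ?addr0.
Qed.

Lemma fpsCM : {morph fpsC : p q / p * q}.
Proof.
move=> p q; apply: fpsP => m.
by rewrite /= ps_mul_const ps_const_strip /ps_const strip_eq_nil; case: ifP; rewrite ?mulr0.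
Qed.

HB.instance Definition _ := GRing.isNmodMorphism.Build rat fps fpsC (erefl, fpsCD).
HB.instance Definition _ := GRing.isMonoidMorphism.Build rat fps fpsC (erefl, fpsCM).

Lemma fps_coefD (f g : fps) m : fps_coef (f + g) m = f m + g m.
Proof. by rewrite /= /ps_add !fps_coef_strip. Qed.
Lemma fps_coef0 m : fps_coef 0 m = 0.
Proof. by rewrite /= /ps_const; case: ifP. Qed.
Lemma fps_coef_sum I (r : seq I) (P : pred I) (F : I -> fps) m :
  fps_coef (\sum_(i <- r | P i) F i) m = \sum_(i <- r | P i) F i m.
Proof.
exact: (big_morph (fun f : fps => f m) (fun f g => fps_coefD f g m) (fps_coef0 m)).
Qed.

Lemma ps_scaleE q (f : fps) : ps_scale q f = fps_coef (fpsC q * f).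
Proof. by apply: funext => m; rewrite /= ps_mul_const. Qed.

(** * Truncation by total degree and infinite sums *)

Definition order_geq (f : fps) n := forall m, (sumn m < n)%N -> f m = 0.
Definition eq_upto D (f g : fps) := forall m, (sumn m <= D)%N -> f m = g m.

Lemma eq_uptoP (f g : fps) : (forall D, eq_upto D f g) -> f = g.
Proof. by move=> H; apply: fpsP => m; apply: (H (sumn m)). Qed.

Lemma eq_upto_trans D (f g h : fps) : eq_upto D f g -> eq_upto D g h -> eq_upto D f h.
Proof. by move=> H1 H2 m Hm; rewrite H1 // H2. Qed.

Lemma eq_upto_sym D (f g : fps) : eq_upto D f g -> eq_upto D g f.
Proof. by move=> H m Hm; rewrite H. Qed.

Lemma eq_upto_add D (f f' g g' : fps) :
  eq_upto D f f' -> eq_upto D g g' -> eq_upto D (f + g) (f' + g').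
Proof. by move=> H1 H2 m Hm; rewrite !fps_coefD H1 // H2. Qed.

Lemma eq_upto_sum D I (r : seq I) (P : pred I) (F G : I -> fps) :
  (forall i, P i -> eq_upto D (F i) (G i)) ->
  eq_upto D (\sum_(i <- r | P i) F i) (\sum_(i <- r | P i) G i).
Proof. by move=> H; apply: (big_ind2 (eq_upto D)) => //; apply: eq_upto_add. Qed.

Lemma eq_upto_mul D (f f' g g' : fps) :
  eq_upto D f f' -> eq_upto D g g' -> eq_upto D (f * g) (f' * g').
Proof.
move=> H1 H2 m Hm; apply: eq_big_seq => y Hy.
have E := sumn_mdiff Hy; rewrite sumn_strip in E.
by rewrite H1 ?H2 // sumn_strip; apply: leq_trans Hm; rewrite -E ?leq_addl ?leq_addr.
Qed.

Lemma order_geq_eq_upto0 D (f : fps) n : order_geq f n -> (D < n)%N -> eq_upto D f 0.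
Proof. by move=> H Hn m Hm; rewrite fps_coef0 H //; apply: leq_ltn_trans Hn. Qed.

Lemma order_geq_le (f : fps) n n' : order_geq f n -> (n' <= n)%N -> order_geq f n'.
Proof. by move=> H Hn m Hm; apply: H; apply: leq_trans Hn. Qed.

Lemma order_geq_add (f g : fps) n : order_geq f n -> order_geq g n -> order_geq (f + g) n.
Proof. by move=> H1 H2 m Hm; rewrite fps_coefD H1 // H2 // addr0. Qed.

Lemma order_geq_sum I (r : seq I) (P : pred I) (F : I -> fps) n :
  (forall i, P i -> order_geq (F i) n) -> order_geq (\sum_(i <- r | P i) F i) n.
Proof.
move=> H; apply: (big_ind (fun f => order_geq f n)) => //.
- by move=> m _; rewrite fps_coef0.
- by move=> f g; apply: order_geq_add.
Qed.

Lemma order_geq_mul (f g : fps) p q :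
  order_geq f p -> order_geq g q -> order_geq (f * g) (p + q).
Proof.
move=> H1 H2 m Hm; apply: big1_seq => y /andP[_ Hy].
have E := sumn_mdiff Hy; rewrite sumn_strip in E.
case: (ltnP (sumn y) p) => Hp; first by rewrite H1 ?mul0r // sumn_strip.
rewrite H2 ?mulr0 // sumn_strip -(ltn_add2l (sumn y)) E.
by apply: leq_trans Hm _; rewrite leq_add2r.
Qed.

Lemma order_geq_mulr (f g : fps) q : order_geq g q -> order_geq (f * g) q.
Proof. by move=> H; rewrite -[q]add0n; apply: order_geq_mul. Qed.

Lemma order_geq_mull (f g : fps) q : order_geq f q -> order_geq (f * g) q.
Proof. by move=> H; rewrite -[q]addn0; apply: order_geq_mul. Qed.

Lemma order_geq_exp (f : fps) n : order_geq f 1 -> order_geq (f ^+ n) n.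
Proof.
move=> H; elim: n => [|n IH]; first by [].
by rewrite exprS -add1n; apply: order_geq_mul.
Qed.

Lemma strip_stable_sum F : strip_stable (ps_sum F).
Proof. by move=> m; rewrite /ps_sum strip_idem. Qed.

Definition fps_sum (G : nat -> fps) : fps :=
  exist _ _ (strip_stable_sum (fun n => fps_coef (G n))).

Lemma ps_sum_eventually (F : nat -> ps) m N :
  (forall n, (N <= n)%N -> F n (strip m) = 0) ->
  ps_sum F m = \sum_(n < N) F n (strip m).
Proof.
move=> F0; pose P c := exists N, forall N', (N <= N')%N -> \sum_(n < N') F n (strip m) = c.
have PN : P (\sum_(n < N) F n (strip m)).
  exists N => N' HN; rewrite (big_ord_widen_cond N' xpredT (fun n => F n (strip m)) HN).
  rewrite (bigID (fun i : 'I_N' => (i < N)%N)) /= [X in _ + X]big1 ?addr0 // => i.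
  by rewrite -leqNgt => /F0.
have [N1 HN1] : P (epsilon (inhabits 0) P).
  by apply: epsilon_spec; exists (\sum_(n < N) F n (strip m)).
have [N0 HN0] := PN.
by rewrite /ps_sum -/P -(HN1 (maxn N0 N1)) ?leq_maxr // (HN0 (maxn N0 N1)) // leq_maxl.
Qed.

Lemma fps_sum_finite N (G : nat -> fps) :
  (forall n, (N <= n)%N -> G n = 0) -> fps_sum G = \sum_(n < N) G n.
Proof.
move=> G0; apply: fpsP => m; rewrite fps_coef_sum /= (@ps_sum_eventually _ m N).
  by apply: eq_bigr => n _; rewrite fps_coef_strip.
by move=> n /G0 ->; rewrite fps_coef0.
Qed.

Section SummableFamily.
Variable G : nat -> fps.
Hypothesis G_order : forall n, order_geq (G n) n.

Lemma fps_sum_eq_upto D N : (D < N)%N -> eq_upto D (fps_sum G) (\sum_(n < N) G n).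
Proof.
move=> DN m Hm; rewrite fps_coef_sum /= (@ps_sum_eventually _ m N).
  by apply: eq_bigr => n _; rewrite fps_coef_strip.
move=> n Nn; rewrite (order_geq_eq_upto0 (@G_order n) (leq_trans DN Nn)) ?sumn_strip //.
exact: fps_coef0.
Qed.

Lemma order_geq_fps_sum p : (forall n, order_geq (G n) p) -> order_geq (fps_sum G) p.
Proof.
move=> Gp m Hm; have := fps_sum_eq_upto (ltnSn (sumn m)) (leqnn _).
by move->; rewrite fps_coef_sum big1 // => n _; rewrite Gp.
Qed.

End SummableFamily.

Lemma fps_sum_mull (G : nat -> fps) f : (forall n, order_geq (G n) n) ->
  fps_sum (fun n => f * G n) = f * fps_sum G.
Proof.
move=> G_order; apply: eq_uptoP => D; have DN := ltnSn D.
apply: eq_upto_trans (fps_sum_eq_upto _ DN) _ => [n|]; first exact/order_geq_mulr.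
rewrite -mulr_sumr => m Hm; symmetry.
exact: (eq_upto_mul (fun m _ => erefl) (fps_sum_eq_upto G_order DN)).
Qed.

Lemma fps_sumD (G H : nat -> fps) :
  (forall n, order_geq (G n) n) -> (forall n, order_geq (H n) n) ->
  fps_sum (fun n => G n + H n) = fps_sum G + fps_sum H.
Proof.
move=> G_order H_order; apply: eq_uptoP => D; have DN := ltnSn D.
apply: eq_upto_trans (fps_sum_eq_upto _ DN) _ => [n|].
  exact: order_geq_add.
rewrite big_split; apply/eq_upto_sym/eq_upto_add; exact: fps_sum_eq_upto.
Qed.

Lemma eq_upto_square_triangle D N (X : nat -> nat -> fps) : (D < N)%N ->
  (forall n m, order_geq (X n m) (n + m)) ->
  eq_upto D (\sum_(0 <= n < N) \sum_(0 <= m < N) X n m)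
            (\sum_(0 <= s < N) \sum_(0 <= n < s.+1) X n (s - n)%N).
Proof.
move=> DN X_order; rewrite -sum_triangle_antidiag.
rewrite big_nat_cond [X in eq_upto _ _ X]big_nat_cond.
apply: eq_upto_sum => n /andP[/andP[_ Hn] _].
rewrite (@big_cat_nat _ _ _ (N - n) 0 N) //= ?leq_subr //.
rewrite -[X in eq_upto _ _ X]addr0; apply: eq_upto_add => // m Hm.
rewrite fps_coef_sum fps_coef0 big_nat_cond big1 // => j /andP[/andP[Hj _] _].
by apply: X_order; apply: leq_ltn_trans Hm _; lia.
Qed.

Lemma fps_sum_antidiag (X : nat -> nat -> fps) :
  (forall n m, order_geq (X n m) (n + m)) ->
  fps_sum (fun n => fps_sum (X n)) =
  fps_sum (fun s => \sum_(0 <= n < s.+1) X n (s - n)%N).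
Proof.
move=> X_order.
have Xm n m : order_geq (X n m) m by apply: order_geq_le (X_order n m) (leq_addl _ _).
have Xn n m : order_geq (X n m) n by apply: order_geq_le (X_order n m) (leq_addr _ _).
have sum_order s : order_geq (\sum_(0 <= n < s.+1) X n (s - n)%N) s.
  rewrite big_nat_cond; apply: order_geq_sum => n /andP[/andP[_ Hn] _].
  by have := X_order n (s - n)%N; rewrite subnKC // -ltnS.
apply: eq_uptoP => D; have DN := ltnSn D.
apply: eq_upto_trans (fps_sum_eq_upto _ DN) _ => [n|].
  exact: order_geq_fps_sum.
apply: eq_upto_trans (_ : eq_upto D _ (\sum_(0 <= n < D.+1) \sum_(0 <= m < D.+1) X n m)) _.
  rewrite big_mkord; apply: eq_upto_sum => n _; rewrite big_mkord.
  exact: fps_sum_eq_upto.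
apply: eq_upto_trans (eq_upto_square_triangle DN X_order) _.
by rewrite big_mkord; apply/eq_upto_sym/fps_sum_eq_upto.
Qed.

Lemma natr_neq0 n : (0 < n)%N -> (n%:R : rat) != 0.
Proof. by rewrite pnatr_eq0 -lt0n. Qed.

Lemma invnM a b : invn (a * b) = invn a * invn b.
Proof. by rewrite /invn natrM invfM. Qed.

Lemma sgnD a b : sgn (a + b) = sgn a * sgn b.
Proof. exact: exprD. Qed.

Lemma invn_fact_binomial n i : (i <= n)%N ->
  invn i`! * invn (n - i)`! = 'C(n, i)%:R * invn n`!.
Proof.
move=> le_in; rewrite /invn -(bin_fact le_in) !natrM !invfM [RHS]mulrA mulfV ?mul1r //.
by apply: natr_neq0; rewrite bin_gt0.
Qed.

Lemma sum_sgn_inv_fact s :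
  \sum_(0 <= n < s.+1) sgn n * invn n`! * invn (s - n)`! = (s == 0%N)%:R.
Proof.
transitivity (invn s`! * (1 - 1 : rat) ^+ s).
  rewrite exprBn big_mkord mulr_sumr; apply: eq_bigr => i _.
  rewrite !expr1n !mulr1 -mulrA invn_fact_binomial -1?ltnS //.
  by rewrite -mulr_natr /sgn; ring.
by rewrite subrr expr0n; case: (s =P 0%N) => [->|_]; rewrite ?mulr0 // /invn invr1 mulr1.
Qed.

Definition exp_neg_half n := sgn n * invn (2 ^ n * n`!).
Definition inv_odd_dfact j := invn (dfact (2 * j + 1)).

Lemma inv_odd_dfactS j : inv_odd_dfact j.+1 * (2 * j + 3)%:R = inv_odd_dfact j.
Proof.
rewrite /inv_odd_dfact (_ : 2 * j.+1 + 1 = (2 * j + 1).+2)%N; last by lia.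
rewrite /= -[(2 * j + 1).+2]addn2 -addnA invnM /invn mulrAC mulVf ?mul1r //.
by apply: natr_neq0; lia.
Qed.

Lemma exp_neg_halfS n : exp_neg_half n.+1 * (2 * n.+1)%:R = - exp_neg_half n.
Proof.
rewrite /exp_neg_half /sgn exprS mulN1r /invn expnS factS !natrM !invfM.
have := natr_neq0 (expn_gt0 2 n); have := natr_neq0 (fact_gt0 n).
have := natr_neq0 (ltn0Sn n); rewrite -natr1 => h1 h2 h3.
by field; rewrite h1 h2 h3.
Qed.

(* Multiplying by 2s+1 = (2(s-n)+1) + 2n makes the sum telescope, by the
   two recurrences above. *)
Lemma sum_exp_neg_half_odd_dfact s :
  \sum_(0 <= n < s.+1) exp_neg_half n * inv_odd_dfact (s - n) =
  sgn s * invn (2 ^ s * s`! * (2 * s + 1)).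
Proof.
have s21 : ((2 * s + 1)%:R : rat) != 0 by apply: natr_neq0; rewrite addn1.
apply: (mulIf s21); rewrite invnM mulrA -[_ * _ * _ * _]mulrA /invn mulVf // mulr1.
rewrite -/(invn _) -/(exp_neg_half s); case: s s21 => [|s] _.
  by rewrite big_nat1 /inv_odd_dfact /= /invn !invr1 !mulr1.
rewrite mulr_suml.
under eq_big_nat => n /andP[_ Hn].
  rewrite (_ : (2 * s.+1 + 1)%:R = (2 * (s.+1 - n) + 1)%:R + (2 * n)%:R :> rat); last first.
    by rewrite -natrD; congr (_%:R); lia.
  rewrite mulrDr.
  over.
rewrite big_split /= big_nat_recr //= [X in _ + X]big_nat_recl //= subnn mulr0 add0r.
have -> : inv_odd_dfact 0 = 1 by rewrite /inv_odd_dfact /invn invr1.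
rewrite !mulr1.
under eq_big_nat => n /andP[_ Hn].
  rewrite (_ : (s.+1 - n = (s - n).+1)%N); last by lia.
  rewrite (_ : (2 * (s - n).+1 + 1 = 2 * (s - n) + 3)%N); last by lia.
  rewrite -mulrA inv_odd_dfactS.
  over.
under [X in _ + X]eq_big_nat => n /andP[_ Hn].
  rewrite subSS mulrAC exp_neg_halfS mulNr.
  over.
by rewrite sumrN addrAC subrr add0r.
Qed.

(** * Series in an auxiliary variable *)

(* A sequence [x : nat -> fps] stands for the series [\sum_n x n z^n] in an
   auxiliary variable [z]; [cauchy] is the product of such series. *)
Definition cauchy (x y : nat -> fps) s := \sum_(0 <= n < s.+1) x n * y (s - n)%N.

Definition unit_seq n : fps := (n == 0%N)%:R.

Lemma cauchyC x y : cauchy x y = cauchy y x.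
Proof.
apply: funext => s; rewrite /cauchy big_nat_rev; apply: eq_big_nat => n /andP[_ Hn].
by rewrite add0n subSS subKn 1?mulrC // -ltnS.
Qed.

Lemma cauchyA x y z : cauchy (cauchy x y) z = cauchy x (cauchy y z).
Proof.
apply: funext => s; rewrite /cauchy.
under eq_bigr => a _ do rewrite big_distrl /=.
under [RHS]eq_bigr => b _ do rewrite big_distrr /=.
rewrite (sum_antidiag3 (fun b c d => x b * y c * z d)).
by apply: eq_bigr => b _; apply: eq_bigr => c _; rewrite mulrA.
Qed.

Lemma cauchyACA a b c d :
  cauchy (cauchy a b) (cauchy c d) = cauchy (cauchy a c) (cauchy b d).
Proof. by rewrite !cauchyA -(cauchyA b c d) (cauchyC b c) cauchyA. Qed.

Lemma cauchy_unit x : cauchy x unit_seq = x.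
Proof.
apply: funext => s; rewrite /cauchy big_nat_recr //= subnn mulr1 big1_seq ?add0r //.
move=> n /andP[_]; rewrite mem_index_iota => /andP[_ Hn].
by rewrite /unit_seq subn_eq0 leqNgt Hn mulr0.
Qed.

Lemma cauchyNl x y s : cauchy (fun n => - x n) y s = - cauchy x y s.
Proof. by rewrite /cauchy -sumrN; apply: eq_bigr => n _; rewrite mulNr. Qed.

Definition exp_series (V : fps) n := fpsC (invn n`!) * V ^+ n.
Definition exp_neg_series (V : fps) n := fpsC (sgn n * invn n`!) * V ^+ n.
Definition exp_neg_half_series (R : fps) n := fpsC (exp_neg_half n) * R ^+ (2 * n).
Definition odd_series (R : fps) j := fpsC (inv_odd_dfact j) * R ^+ (2 * j + 1).
Definition odd_exp_series (R : fps) n :=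
  fpsC (sgn n * invn (2 ^ n * n`! * (2 * n + 1))) * R ^+ (2 * n + 1).

(* [Pseries] and [Qseries] are the fps versions of [Pn] and of the inner sum
   of [s_inv]. *)
Definition Pseries (V R : fps) n := \sum_(i < n.+1)
  fpsC (invn (i`! * dfact (2 * n - 2 * i + 1))) * (V ^+ i * R ^+ (2 * n - 2 * i + 1)).
Definition Qseries (V R : fps) n := \sum_(i < n.+1)
  fpsC (sgn n.+1 * invn (2 ^ (n - i) * i`! * (n - i)`! * (2 * n - 2 * i + 1)))
    * (V ^+ i * R ^+ (2 * n - 2 * i + 1)).

Lemma Pseries0 V R : Pseries V R 0 = R.
Proof. by rewrite /Pseries big_ord1 /= /invn invr1 rmorph1 expr0 expr1 !mul1r. Qed.

Lemma exp_neg_seriesK V : cauchy (exp_neg_series V) (exp_series V) = unit_seq.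
Proof.
apply: funext => s.
transitivity (fpsC (\sum_(0 <= n < s.+1) sgn n * invn n`! * invn (s - n)`!) * V ^+ s).
  rewrite rmorph_sum mulr_suml; apply: eq_big_nat => n /andP[_ Hn].
  rewrite /exp_neg_series /exp_series !rmorphM.
  by rewrite -[in V ^+ s](subnKC (_ : n <= s)%N) -1?ltnS // exprD; ring.
rewrite sum_sgn_inv_fact rmorph_nat /unit_seq.
by case: (s =P 0%N) => [->|_]; rewrite ?mul0r // mul1r expr0.
Qed.

Lemma odd_exp_series_cauchy R :
  cauchy (exp_neg_half_series R) (odd_series R) = odd_exp_series R.
Proof.
apply: funext => s.
rewrite /odd_exp_series -sum_exp_neg_half_odd_dfact rmorph_sum mulr_suml.
apply: eq_big_nat => n /andP[_ Hn]; rewrite /exp_neg_half_series /odd_series rmorphM.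
rewrite (_ : (2 * s + 1 = 2 * n + (2 * (s - n) + 1))%N) ?exprD; first ring.
by lia.
Qed.

Lemma Pseries_cauchy V R : Pseries V R = cauchy (exp_series V) (odd_series R).
Proof.
apply: funext => n; rewrite /Pseries /cauchy big_mkord; apply: eq_bigr => i _.
have Hi := ltn_ord i.
rewrite (_ : (2 * n - 2 * i + 1 = 2 * (n - i) + 1)%N); last by lia.
by rewrite invnM /exp_series /odd_series rmorphM; ring.
Qed.

Lemma Qseries_cauchy V R n :
  Qseries V R n = - cauchy (exp_neg_series V) (odd_exp_series R) n.
Proof.
rewrite /Qseries /cauchy big_mkord -sumrN; apply: eq_bigr => i _.
have Hi := ltn_ord i.
rewrite (_ : (2 * n - 2 * i + 1 = 2 * (n - i) + 1)%N); last by lia.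
have -> : (2 ^ (n - i) * i`! * (n - i)`! * (2 * (n - i) + 1) =
           i`! * (2 ^ (n - i) * (n - i)`! * (2 * (n - i) + 1)))%N by lia.
have -> : sgn n.+1 = - (sgn i * sgn (n - i)).
  by rewrite -sgnD subnKC -1?ltnS // /sgn exprS mulN1r.
rewrite invnM /exp_neg_series /odd_exp_series !rmorphM /sgn; ring.
Qed.

Lemma exp_neg_series_add_half V R :
  exp_neg_series (V + fpsC (invn 2) * R ^+ 2) =
  cauchy (exp_neg_half_series R) (exp_neg_series V).
Proof.
apply: funext => n; rewrite /exp_neg_series /cauchy exprDn big_mkord mulr_sumr.
apply: eq_bigr => i _; have Hi := ltn_ord i.
rewrite -mulr_natr -(rmorph_nat fpsC) exprMn -rmorphXn -exprM.
transitivity (fpsC (sgn n * (invn n`! * 'C(n, i)%:R) * invn 2 ^+ i) *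
              (R ^+ (2 * i) * V ^+ (n - i))).
  by rewrite !rmorphM; ring.
have -> : sgn n = sgn i * sgn (n - i) by rewrite -sgnD subnKC // -ltnS.
have -> : invn n`! * 'C(n, i)%:R = invn i`! * invn (n - i)`!.
  by rewrite mulrC invn_fact_binomial // -ltnS.
have -> : invn 2 ^+ i = invn (2 ^ i) by rewrite /invn natrX exprVn.
rewrite /exp_neg_half_series /exp_neg_half invnM !rmorphM; ring.
Qed.

Lemma Pseries_Qseries_cancel V R s :
  cauchy (exp_neg_series (V + fpsC (invn 2) * R ^+ 2)) (Pseries V R) s +
  cauchy (Qseries V R) (exp_series V) s = 0.
Proof.
have -> : Qseries V R = fun n => - cauchy (exp_neg_series V) (odd_exp_series R) n.
  by apply: funext => n; apply: Qseries_cauchy.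
rewrite exp_neg_series_add_half (cauchyC (exp_neg_half_series R)) Pseries_cauchy.
rewrite cauchyACA exp_neg_seriesK odd_exp_series_cauchy cauchyNl cauchyA.
by rewrite (cauchyC (odd_exp_series R)) -cauchyA exp_neg_seriesK cauchyC cauchy_unit subrr.
Qed.

Lemma order_geq_exp_series V n : order_geq V 1 -> order_geq (exp_series V n) n.
Proof. by move=> V1; apply/order_geq_mulr/order_geq_exp. Qed.

Lemma order_geq_exp_neg_series V n : order_geq V 1 -> order_geq (exp_neg_series V n) n.
Proof. by move=> V1; apply/order_geq_mulr/order_geq_exp. Qed.

Lemma fps_sum_cauchy (x y Z : nat -> fps) k :
  (forall n, order_geq (x n) n) -> (forall m, order_geq (y m) m) ->
  fps_sum (fun n => x n * fps_sum (fun m => y m * Z (m + (n + k))%N)) =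
  fps_sum (fun s => cauchy x y s * Z (s + k)%N).
Proof.
move=> x_order y_order.
have yZ_order n m : order_geq (y m * Z (m + (n + k))%N) m by apply: order_geq_mull.
under eq_fun => n do rewrite -fps_sum_mull //.
rewrite fps_sum_antidiag => [|n m]; last exact: order_geq_mul.
congr fps_sum; apply: funext => s; rewrite /cauchy mulr_suml.
apply: eq_big_nat => n /andP[_ Hn]; rewrite addnA subnK -1?ltnS //; exact: mulrA.
Qed.

Lemma fps_sum_unit (Z : nat -> fps) : fps_sum (fun s => unit_seq s * Z s) = Z 0%N.
Proof.
by rewrite (@fps_sum_finite 1) ?big_ord1 ?mul1r // => -[|n] //; rewrite mul0r.
Qed.

Lemma fps_sum_exp_inversion V (Z : nat -> fps) k : order_geq V 1 ->
  fps_sum (fun n => exp_neg_series V n *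
                    fps_sum (fun m => exp_series V m * Z (m + (n + k))%N)) = Z k.
Proof.
move=> V1; rewrite fps_sum_cauchy ?exp_neg_seriesK ?fps_sum_unit // => n.
  exact: order_geq_exp_neg_series.
exact: order_geq_exp_series.
Qed.

Lemma strip_stable_strip (f : ps) : strip_stable (fun m => f (strip m)).
Proof. by move=> m; rewrite strip_idem. Qed.

Definition fps_of (f : ps) : fps := exist _ _ (strip_stable_strip f).

Lemma order_geq_fps_of (f : ps) : f [::] = 0 -> order_geq (fps_of f) 1.
Proof.
move=> f0 m; rewrite ltnS leqn0 -strip_eq_nil => /eqP /= ->; exact: f0.
Qed.

Lemma fps_coefM (f g : fps) : fps_coef (f * g) = ps_mul f g.
Proof. by []. Qed.

Lemma ps_pow_fps (f : fps) n : ps_pow f n = fps_coef (f ^+ n).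
Proof. by elim: n => [|n IH] //=; rewrite exprS IH. Qed.

Lemma ps_pow_fps_of (f : ps) n : ps_pow f n = fps_coef (fps_of f ^+ n).
Proof.
rewrite -ps_pow_fps; elim: n => [|n /= ->] //.
by apply: funext => m; apply: eq_bigr => y _ /=; rewrite strip_idem.
Qed.

Lemma ps_big_add I (r : seq I) (P : pred I) (F : I -> fps) :
  \big[ps_add/ps_zero]_(i <- r | P i) fps_coef (F i) = fps_coef (\sum_(i <- r | P i) F i).
Proof. by elim: r => [|x r IH]; rewrite ?big_nil // !big_cons; case: (P x); rewrite IH. Qed.

Lemma strip_stable_var j : strip_stable (ps_var j).
Proof. by move=> m; rewrite /ps_var strip_idem. Qed.

Definition tC k : fps := exist _ _ (strip_stable_var (2 * k)).
Definition sC k : fps := exist _ _ (strip_stable_var (2 * k).+1).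
Definition ttC n : fps := if n == 1%N then tC 1 - 1 else tC n.

Lemma ttv_fps n : ttv n = fps_coef (ttC n).
Proof. by rewrite /ttv /ttC; case: (n == 1%N). Qed.

Section ItzyksonZuber.
Variables v r : ps.
Let V := fps_of v.
Let R := fps_of r.
Let W := V + fpsC (invn 2) * R ^+ 2.

Definition Ifps k := fps_sum (fun n => exp_series V n * tC (n + k)).
Definition Jfps k := fps_sum (fun n => Pseries V R n * tC (n + k).+1)
                   + fps_sum (fun n => exp_series W n * sC (n + k)).

Lemma wvr_fps : wvr v r = fps_coef W.
Proof.
rewrite /wvr ps_pow_fps_of ps_scaleE; apply: funext => m.
by rewrite /= /ps_add /= strip_idem.
Qed.

Lemma Pn_fps n : Pn v r n = fps_coef (Pseries V R n).
Proof.
rewrite /Pn /Pseries -ps_big_add; apply: eq_bigr => i _.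
by rewrite !ps_pow_fps_of -fps_coefM ps_scaleE.
Qed.

Lemma Ik_fps k : Ik v k = fps_coef (Ifps k).
Proof.
congr ps_sum; apply: funext => n.
rewrite ps_pow_fps_of -[tv _]/(fps_coef (tC _)) -fps_coefM ps_scaleE.
by congr fps_coef; rewrite /exp_series; ring.
Qed.

Lemma Jk_fps k : Jk v r k = fps_coef (Jfps k).
Proof.
congr ps_add; congr ps_sum; apply: funext => n.
  by rewrite Pn_fps -[tv _]/(fps_coef (tC _)) -fps_coefM mulrC.
rewrite wvr_fps ps_pow_fps -[sv _]/(fps_coef (sC _)) -fps_coefM ps_scaleE.
by congr fps_coef; rewrite /exp_series; ring.
Qed.

Lemma EL1_fps : EL1 v -> fps_sum (fun n => exp_series V n * ttC n) = 0.
Proof.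
move=> EL; apply: fpsP => m; rewrite -[fps_coef 0]/ps_zero -EL; congr (ps_sum _ m).
apply: funext => n; rewrite ps_pow_fps_of ttv_fps -fps_coefM ps_scaleE.
by congr fps_coef; rewrite /exp_series; ring.
Qed.

Lemma EL2_fps : EL2 v r ->
  fps_sum (fun n => Pseries V R n * ttC n.+1) +
  fps_sum (fun n => exp_series W n * sC n) = 0.
Proof.
move=> EL; apply: fpsP => m; rewrite -[fps_coef 0]/ps_zero -EL; congr (ps_add _ _ m).
  congr ps_sum; apply: funext => n.
  by rewrite Pn_fps ttv_fps -fps_coefM mulrC.
congr ps_sum; apply: funext => n.
rewrite wvr_fps ps_pow_fps -[sv _]/(fps_coef (sC _)) -fps_coefM ps_scaleE.
by congr fps_coef; rewrite /exp_series; ring.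
Qed.

Lemma t_inv_fps k :
  t_inv v k = fps_coef (fps_sum (fun n => exp_neg_series (Ifps 0) n * Ifps (n + k))).
Proof.
congr ps_sum; apply: funext => n.
rewrite !Ik_fps ps_pow_fps -fps_coefM ps_scaleE.
by congr fps_coef; rewrite /exp_neg_series mulrA.
Qed.

Lemma s_inv_fps k : s_inv v r k = fps_coef
  (fps_sum (fun n => Qseries (Ifps 0) (Jfps 0) n * Ifps (n + k).+1) +
   fps_sum (fun n => exp_neg_series (Ifps 0 + fpsC (invn 2) * Jfps 0 ^+ 2) n *
                     Jfps (n + k))).
Proof.
congr ps_add; congr ps_sum; apply: funext => n.
  rewrite /Qseries mulr_suml -ps_big_add; apply: eq_bigr => i _.
  rewrite !Ik_fps Jk_fps !ps_pow_fps -!fps_coefM ps_scaleE.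
  by congr fps_coef; rewrite mulrA.
rewrite !Ik_fps !Jk_fps ps_pow_fps ps_scaleE.
rewrite -[ps_add _ _]/(fps_coef (Ifps 0 + _)) ps_pow_fps -fps_coefM ps_scaleE.
by congr fps_coef; rewrite /exp_neg_series mulrA.
Qed.

End ItzyksonZuber.

(** * Inversion *)

Lemma order_geq_cauchy (x y : nat -> fps) s :
  (forall n, order_geq (x n) n) -> (forall m, order_geq (y m) m) ->
  order_geq (cauchy x y s) s.
Proof.
move=> x_order y_order; rewrite /cauchy big_nat_cond.
apply: order_geq_sum => n /andP[/andP[_ Hn] _].
rewrite -[s in order_geq _ s](subnKC (_ : n <= s)%N) -1?ltnS //.
exact: order_geq_mul (x_order n) (y_order _).
Qed.

Lemma order_geq_monomial (V R : fps) n i : order_geq V 1 -> order_geq R 1 ->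
  (i <= n)%N -> order_geq (V ^+ i * R ^+ (2 * n - 2 * i + 1)) n.
Proof.
move=> V1 R1 le_in; apply: (@order_geq_le _ (i + (2 * n - 2 * i + 1))); last by lia.
exact: order_geq_mul (order_geq_exp V1) (order_geq_exp R1).
Qed.

Section Inversion.
Variables v r : ps.
Hypotheses (v0 : v [::] = 0) (r0 : r [::] = 0).
Let V := fps_of v.
Let R := fps_of r.
Let W := V + fpsC (invn 2) * R ^+ 2.
Let V1 : order_geq V 1 := order_geq_fps_of v0.
Let R1 : order_geq R 1 := order_geq_fps_of r0.

Let W1 : order_geq W 1.
Proof.
apply/order_geq_add/order_geq_mulr => //.
exact: order_geq_le (@order_geq_exp R 2 R1) _.
Qed.

Let P_order n : order_geq (Pseries V R n) n.
Proof.
apply: order_geq_sum => i _; apply/order_geq_mulr/order_geq_monomial => //.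
by rewrite -ltnS.
Qed.

Let Q_order n : order_geq (Qseries V R n) n.
Proof.
apply: order_geq_sum => i _; apply/order_geq_mulr/order_geq_monomial => //.
by rewrite -ltnS.
Qed.

Lemma Ifps0 : EL1 v -> Ifps v 0 = V.
Proof.
move=> /EL1_fps EL.
have -> : Ifps v 0 =
    fps_sum (fun n => exp_series V n * ttC n + if n == 1%N then V else 0).
  congr fps_sum; apply: funext => n; rewrite addn0 /ttC.
  case: n => [|[|n]] /=; rewrite ?addr0 //.
  by rewrite /exp_series /invn invr1 rmorph1 mul1r expr1 mulrBr mulr1 subrK.
have E_order n : order_geq (exp_series V n * ttC n) n.
  exact/order_geq_mull/order_geq_exp_series.
have V_order n : order_geq (if n == 1%N then V else 0) n.
  by case: n => [|[|n]] //= m; rewrite fps_coef0.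
rewrite fps_sumD // EL add0r (@fps_sum_finite 2) => [|[|[|n]]] //.
by rewrite !big_ord_recl big_ord0 /= addr0 add0r.
Qed.

Lemma Jfps0 : EL2 v r -> Jfps v r 0 = R.
Proof.
move=> /EL2_fps EL.
have R_order n : order_geq (if n == 0%N then R else 0) n.
  by case: n => [|n] //= m; rewrite fps_coef0.
have -> : Jfps v r 0 = fps_sum (fun n => Pseries V R n * ttC n.+1) +
    fps_sum (fun n => if n == 0%N then R else 0) + fps_sum (fun n => exp_series W n * sC n).
  rewrite -fps_sumD // => [|n]; last exact/order_geq_mull/P_order.
  congr (fps_sum _ + fps_sum _); apply: funext => n; rewrite addn0 //.
  case: n => [|n] /=; rewrite ?addr0 //.
  by rewrite Pseries0 mulrBr mulr1 subrK.
rewrite addrAC EL add0r (@fps_sum_finite 1) => [|[|n]] //.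
by rewrite big_ord1.
Qed.

Lemma tC_inversion k : EL1 v ->
  tC k = fps_sum (fun n => exp_neg_series (Ifps v 0) n * Ifps v (n + k)).
Proof. by move=> EL; rewrite Ifps0 // fps_sum_exp_inversion. Qed.

Lemma sC_inversion k : EL1 v -> EL2 v r ->
  sC k = fps_sum (fun n => Qseries (Ifps v 0) (Jfps v r 0) n * Ifps v (n + k).+1) +
         fps_sum (fun n => exp_neg_series (Ifps v 0 + fpsC (invn 2) * Jfps v r 0 ^+ 2) n *
                           Jfps v r (n + k)).
Proof.
move=> EL1v EL2vr; rewrite Ifps0 // Jfps0 // -/W.
have W_order n : order_geq (exp_neg_series W n) n by apply: order_geq_exp_neg_series.
have E_order n : order_geq (exp_series V n) n by apply: order_geq_exp_series.
have -> : fps_sum (fun n => Qseries V R n * Ifps v (n + k).+1) =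
          fps_sum (fun s => cauchy (Qseries V R) (exp_series V) s * tC (s + k).+1).
  rewrite -(fps_sum_cauchy (fun j => tC j.+1)) //; congr fps_sum; apply: funext => n.
  by congr (_ * fps_sum _); apply: funext => m; rewrite addnS.
have -> : fps_sum (fun n => exp_neg_series W n * Jfps v r (n + k)) =
          fps_sum (fun s => cauchy (exp_neg_series W) (Pseries V R) s * tC (s + k).+1)
          + sC k.
  rewrite /Jfps; under eq_fun => n do rewrite mulrDr.
  rewrite fps_sumD => [|n|n]; try exact/order_geq_mull.
  by rewrite (fps_sum_cauchy (fun j => tC j.+1)) // (fps_sum_exp_inversion (fun j => sC j)).
rewrite addrA -fps_sumD => [|s|s]; try exact/order_geq_mull/order_geq_cauchy.
under eq_fun => s do rewrite -mulrDl addrC Pseries_Qseries_cancel mul0r.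
by rewrite (@fps_sum_finite 0) ?big_ord0 ?add0r.
Qed.

End Inversion.

Theorem lemma2p2 (v r : ps) :
  v [::] = 0%R -> r [::] = 0%R -> EL1 v -> EL2 v r ->
  forall k : nat, tv k = t_inv v k /\ sv k = s_inv v r k.
Proof.
move=> v0 r0 EL1v EL2vr k; split.
  by rewrite t_inv_fps -tC_inversion.
by rewrite s_inv_fps -sC_inversion.
Qed.
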